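(* Consider the constrained nonlinear system $x(k+1)=f(x(k),u(k))$ with $f(0,0)=0$, input constraint $u\in\mathcal{U}=\{u=[u_1,\dots,u_m]^T\in\mathbb{R}^m:|u_i|\le\bar u_i,\ i=1,\dots,m\}$ and state constraint $x\in\mathcal{X}$ with $0\in\mathcal{X}$. For a horizon $N\ge 1$ and a stage cost $l$, let $$J(x(k),U(k|k))=\sum_{i=0}^{N-1} l\big(x(k+i+1|k),u(k+i|k)\big),$$ where $U(k|k)=[u(k|k)^T,\dots,u(k+N-1|k)^T]^T$, $x(k|k)=x(k)$ and $x(k+i+1|k)=f(x(k+i|k),u(k+i|k))$, and let $J^*(x(k))=\min J(x(k),U(k|k))$ over $u(k+i|k)\in\mathcal{U}$ subject to the dynamics and $x(k+i+1|k)\in\mathcal{X}$, $i=0,\dots,N-1$, with optimal control sequence $u^*(k|k),\dots,u^*(k+N-1|k)$ and optimal predicted states $x^*(k+1|k),\dots,x^*(k+N|k)$. The MPC law applies $u(k)=u^*(k|k)$. Assume there exist $\alpha_1,\alpha_2\in\mathcal{K}_\infty$ with $\alpha_1(\|x\|)\le J^*(x)\le\alpha_2(\|x\|)$ for all $x\in\mathcal{X}$. Suppose the optimisation problem is feasible at the initial state $x(0)=x_0$ and that (at each time $k$ at which it is solved) there exists a control $u(k+N|k)\in\mathcal{U}$ such that $x(k+N+1|k)=f(x^*(k+N|k),u(k+N|k))\in\mathcal{X}$ and $$l\big(x(k+N+1|k),u(k+N|k)\big)-l\big(x^*(k+1|k),u^*(k|k)\big)\le 0.$$ Then (1) the optimisation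 problem is recursively feasible, and (2) the closed-loop system under this MPC algorithm is stable.
   Context: A function $\phi:\mathbb{R}_+\to\mathbb{R}_+$ is of class $\mathcal{K}$ if it is continuous, strictly increasing and $\phi(0)=0$; it is of class $\mathcal{K}_\infty$ if in addition it is radially unbounded. Stability refers to stability of the origin of the closed-loop system $x(k+1)=f(x(k),u^*(k|k))$. *)

From HB Require Import structures.
From mathcomp Require Import all_boot all_order all_algebra.
From mathcomp Require Import all_classical all_reals all_analysis.
Set Implicit Arguments. Unset Strict Implicit. Unset Printing Implicit Defensive.
Import Order.TTheory GRing.Theory Num.Theory.
Import numFieldNormedType.Exports.
Local Open Scope classical_set_scope.
Local Open Scope ring_scope.

Section MPC.
Variable R : realType.

Definition classK (phi : R -> R) : Prop :=
  {within [set x : R | 0 <= x], continuous phi} /\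
  (forall x y : R, 0 <= x -> x < y -> phi x < phi y) /\
  phi 0 = 0.

Definition classKinf (phi : R -> R) : Prop :=
  classK phi /\ (forall M : R, exists r : R, 0 <= r /\ M <= phi r).

Variables (n m : nat).
Notation state := 'rV[R]_n.
Notation input := 'rV[R]_m.

Definition inU (ubar : input) (u : input) : Prop :=
  forall i : 'I_m, `|u ord0 i| <= ubar ord0 i.

(* predicted state x(k+i|k) from x(k|k) = x under the input sequence U *)
Fixpoint pred_state (f : state -> input -> state) (x : state)
  (U : nat -> input) (i : nat) : state :=
  match i with
  | 0 => x
  | i'.+1 => f (pred_state f x U i') (U i')
  end.

Definition Jcost (f : state -> input -> state) (l : state -> input -> R)
  (N : nat) (x : state) (U : nat -> input) : R :=
  \sum_(i < N) l (pred_state f x U i.+1) (U i).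

Definition feasible_seq (f : state -> input -> state) (X : set state)
  (ubar : input) (N : nat) (x : state) (U : nat -> input) : Prop :=
  forall i : nat, (i < N)%N -> inU ubar (U i) /\ X (pred_state f x U i.+1).

Definition feasible f X ubar N (x : state) : Prop :=
  exists U, feasible_seq f X ubar N x U.

Definition optimal f X ubar (l : state -> input -> R) N (x : state)
  (U : nat -> input) : Prop :=
  feasible_seq f X ubar N x U /\
  forall V, feasible_seq f X ubar N x V -> Jcost f l N x U <= Jcost f l N x V.

(* closed loop x(k+1) = f(x(k), u*(k|k)), where sel x is the optimal
   sequence computed at state x *)
Fixpoint closed_loop (f : state -> input -> state)
  (sel : state -> nat -> input) (x0 : state) (k : nat) : state :=
  match k with
  | 0 => x0
  | k'.+1 => f (closed_loop f sel x0 k') (sel (closed_loop f sel x0 k') 0%N)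
  end.

End MPC.

From mathcomp Require Import all_boot all_order all_algebra.
From mathcomp Require Import all_classical all_reals all_analysis.
Set Implicit Arguments.
Unset Strict Implicit.
Unset Printing Implicit Defensive.

Import Order.TTheory GRing.Theory Num.Theory.
Import numFieldNormedType.Exports.
Local Open Scope classical_set_scope.
Local Open Scope ring_scope.

(* At a feasible state x, dropping the first input of the optimal sequence and
   appending the terminal input v of the hypothesis gives an admissible sequence
   at the successor state: this is recursive feasibility.  Its cost is J*(x)
   minus the first stage cost plus the new terminal stage cost, so by the
   terminal condition the optimal value does not increase along the closed loop.
   Hence alpha1 |x_k| <= J*(x_k) <= J*(x_0) <= alpha2 |x_0|, and continuity of
   alpha2 at 0 together with strict monotonicity of alpha1 gives stability. *)

Section ComparisonFunctions.
Variable R : realType.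

Lemma classK_lt_mono (phi : R -> R) : classK phi ->
  {in Num.nneg &, {mono phi : x y / x < y}}.
Proof.
move=> [_ [phi_lt _]]; apply/leW_mono_in/le_mono_in => x y x_ge0 _; exact: phi_lt.
Qed.

Lemma classK_gt0 (phi : R -> R) x : classK phi -> 0 < x -> 0 < phi x.
Proof. by move=> [_ [phi_lt phi0]] x_gt0; rewrite -phi0 phi_lt. Qed.

Lemma classK_small (phi : R -> R) : classK phi ->
  forall e, 0 < e -> exists2 d, 0 < d & phi d < e.
Proof.
move=> [phi_cont [_ phi0]] e e_gt0.
have := (subspace_continuousP _ _).1 phi_cont 0 (lexx 0).
rewrite /from_subspace /= phi0 => /cvgrPdist_lt /(_ e e_gt0).
rewrite /within /= => /nbhs_ballP [d /= d_gt0 near0].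
have d2_gt0 : 0 < d / 2 by rewrite divr_gt0.
exists (d / 2) => //.
have half_in_ball : ball 0 d (d / 2).
  by rewrite /ball /= sub0r normrN gtr0_norm // ltr_pdivrMr // ltr_pMr // ltr1n.
apply: le_lt_trans (ler_norm _) _; rewrite -normrN -sub0r.
exact: near0 half_in_ball (ltW d2_gt0).
Qed.

Lemma classK_comparison (alpha1 alpha2 : R -> R) : classK alpha1 -> classK alpha2 ->
  forall eps, 0 < eps -> exists2 delta, 0 < delta &
    forall a b, 0 <= a -> 0 <= b -> b < delta -> alpha1 a <= alpha2 b -> a < eps.
Proof.
move=> K1 K2 eps eps_gt0.
have [d d_gt0 small] := classK_small K2 (classK_gt0 K1 eps_gt0).
exists d => // a b a_ge0 b_ge0 b_lt_d le12.
have [_ [alpha2_lt _]] := K2.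
rewrite -(classK_lt_mono K1) ?nnegrE ?(ltW eps_gt0) //.
exact: le_lt_trans le12 (lt_trans (alpha2_lt _ _ b_ge0 b_lt_d) small).
Qed.

End ComparisonFunctions.

Section ShiftedSequence.
Variables (R : realType) (n m : nat) (f : 'rV[R]_n -> 'rV[R]_m -> 'rV[R]_n).

Lemma eq_pred_state x (U V : nat -> 'rV[R]_m) i :
  (forall j, (j < i)%N -> U j = V j) -> pred_state f x U i = pred_state f x V i.
Proof.
elim: i => [//|i IH] eqUV /=.
by rewrite IH ?eqUV // => j /ltnW; apply: eqUV.
Qed.

Lemma pred_stateS x (U : nat -> 'rV[R]_m) i :
  pred_state f x U i.+1 = pred_state f (f x (U 0%N)) (fun j => U j.+1) i.
Proof. by elim: i => //= i <-. Qed.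

Definition shift_seq (U : nat -> 'rV[R]_m) (N : nat) (v : 'rV[R]_m) :
  nat -> 'rV[R]_m := fun i => if (i.+1 < N)%N then U i.+1 else v.

Lemma shift_seq_lt U N v i : (i.+1 < N)%N -> shift_seq U N v i = U i.+1.
Proof. by rewrite /shift_seq => ->. Qed.

Lemma shift_seq_last U N v : shift_seq U N.+1 v N = v.
Proof. by rewrite /shift_seq ltnn. Qed.

Lemma pred_state_shift x U N v i : (i < N)%N ->
  pred_state f (f x (U 0%N)) (shift_seq U N v) i = pred_state f x U i.+1.
Proof.
move=> i_lt_N; rewrite pred_stateS; apply: eq_pred_state => j j_lt_i.
by rewrite shift_seq_lt // (leq_ltn_trans j_lt_i i_lt_N).
Qed.

Lemma pred_state_shift_last x U N v : (0 < N)%N ->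
  pred_state f (f x (U 0%N)) (shift_seq U N v) N = f (pred_state f x U N) v.
Proof. by case: N => // N _ /=; rewrite pred_state_shift // shift_seq_last. Qed.

Lemma feasible_seq_shift X ubar N x U v :
  feasible_seq f X ubar N x U -> inU ubar v -> X (f (pred_state f x U N) v) ->
  feasible_seq f X ubar N (f x (U 0%N)) (shift_seq U N v).
Proof.
move=> feasU v_in_U last_in_X i i_lt_N.
case: (ltnP i.+1 N) => [iS_lt_N | N_le_iS].
  by rewrite shift_seq_lt // pred_state_shift //; apply: feasU.
have N_eq : N = i.+1 by apply/eqP; rewrite eqn_leq N_le_iS.
by subst N; rewrite pred_state_shift_last // shift_seq_last.
Qed.

Lemma Jcost_shift l N x U v : (0 < N)%N ->
  Jcost f l N (f x (U 0%N)) (shift_seq U N v) + l (f x (U 0%N)) (U 0%N) =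
  Jcost f l N x U + l (f (pred_state f x U N) v) v.
Proof.
case: N => // N _; rewrite /Jcost big_ord_recr [in RHS]big_ord_recl.
rewrite pred_state_shift_last // shift_seq_last.
rewrite [LHS]addrAC [X in X + _ = _]addrC; congr (_ + _ + _).
apply: eq_bigr => i _; have i_lt_N := ltn_ord i.
by rewrite pred_state_shift ?shift_seq_lt ?ltnS.
Qed.

End ShiftedSequence.

Section RecedingHorizon.
Variables (R : realType) (n m : nat).
Variables (f : 'rV[R]_n -> 'rV[R]_m -> 'rV[R]_n) (X : set 'rV[R]_n).
Variables (ubar : 'rV[R]_m) (l : 'rV[R]_n -> 'rV[R]_m -> R) (N : nat).
Variable sel : 'rV[R]_n -> nat -> 'rV[R]_m.

Hypothesis N_gt0 : (0 < N)%N.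
Hypothesis sel_optimal :
  forall x, feasible f X ubar N x -> optimal f X ubar l N x (sel x).
Hypothesis terminal_decrease : forall x, feasible f X ubar N x ->
  exists v, inU ubar v /\
    X (f (pred_state f x (sel x) N) v) /\
    l (f (pred_state f x (sel x) N) v) v
      - l (pred_state f x (sel x) 1) (sel x 0%N) <= 0.

Lemma feasible_mpc_step x : feasible f X ubar N x ->
  feasible f X ubar N (f x (sel x 0%N)).
Proof.
move=> feas_x; have [feas_sel _] := sel_optimal feas_x.
have [v [v_in_U [last_in_X _]]] := terminal_decrease feas_x.
by exists (shift_seq (sel x) N v); apply: feasible_seq_shift.
Qed.

Lemma mpc_value_step_le x : feasible f X ubar N x ->
  Jcost f l N (f x (sel x 0%N)) (sel (f x (sel x 0%N))) <= Jcost f l N x (sel x).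
Proof.
move=> feas_x; have [feas_sel _] := sel_optimal feas_x.
have [v [v_in_U [last_in_X decrease]]] := terminal_decrease feas_x.
have feas_shift := feasible_seq_shift feas_sel v_in_U last_in_X.
have [_ sel_min] := sel_optimal (ex_intro _ _ feas_shift).
apply: le_trans (sel_min _ feas_shift) _.
by rewrite -(lerD2r (l (f x (sel x 0%N)) (sel x 0%N))) Jcost_shift // lerD2l -subr_le0.
Qed.

Lemma closed_loop_feasible x0 : feasible f X ubar N x0 ->
  forall k, feasible f X ubar N (closed_loop f sel x0 k).
Proof. by move=> feas_x0; elim=> //= k; apply: feasible_mpc_step. Qed.

Lemma closed_loop_in_X x0 : X x0 -> feasible f X ubar N x0 ->
  forall k, X (closed_loop f sel x0 k).
Proof.
move=> x0_in_X feas_x0 [//|k] /=.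
have [feas_sel _] := sel_optimal (closed_loop_feasible feas_x0 k).
exact: (feas_sel 0%N N_gt0).2.
Qed.

Lemma closed_loop_value_le x0 : feasible f X ubar N x0 -> forall k,
  Jcost f l N (closed_loop f sel x0 k) (sel (closed_loop f sel x0 k))
    <= Jcost f l N x0 (sel x0).
Proof.
move=> feas_x0; elim=> //= k IH.
exact: le_trans (mpc_value_step_le (closed_loop_feasible feas_x0 k)) IH.
Qed.

End RecedingHorizon.

Theorem theorem4 (R : realType) (n m : nat)
  (f : 'rV[R]_n -> 'rV[R]_m -> 'rV[R]_n) (X : set 'rV[R]_n)
  (ubar : 'rV[R]_m) (l : 'rV[R]_n -> 'rV[R]_m -> R) (N : nat)
  (alpha1 alpha2 : R -> R) (sel : 'rV[R]_n -> nat -> 'rV[R]_m)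
  (x0 : 'rV[R]_n) :
  f 0 0 = 0 ->
  X 0 ->
  (1 <= N)%N ->
  classKinf alpha1 -> classKinf alpha2 ->
  (forall x, X x -> forall U, optimal f X ubar l N x U ->
     alpha1 `|x| <= Jcost f l N x U /\ Jcost f l N x U <= alpha2 `|x|) ->
  (* the MPC law uses an optimal sequence whenever the problem is feasible *)
  (forall x, feasible f X ubar N x -> optimal f X ubar l N x (sel x)) ->
  (* terminal condition, at every state where the problem is solved *)
  (forall x, feasible f X ubar N x ->
     exists v, inU ubar v /\
       X (f (pred_state f x (sel x) N) v) /\
       l (f (pred_state f x (sel x) N) v) v
         - l (pred_state f x (sel x) 1) (sel x 0%N) <= 0) ->
  feasible f X ubar N x0 ->
  (* (1) recursive feasibility *)
  (forall k, feasible f X ubar N (closed_loop f sel x0 k)) /\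
  (* (2) Lyapunov stability of the origin of the closed loop *)
  (forall eps : R, 0 < eps -> exists delta : R, 0 < delta /\
     forall y0, X y0 -> feasible f X ubar N y0 -> `|y0| < delta ->
       forall k, `|closed_loop f sel y0 k| < eps).
Proof.
move=> _ _ N_gt0 [K1 _] [K2 _] value_bounds sel_opt terminal feas_x0.
split; first exact: (closed_loop_feasible sel_opt terminal feas_x0).
move=> eps eps_gt0; have [delta delta_gt0 small] := classK_comparison K1 K2 eps_gt0.
exists delta; split => // y0 y0_in_X feas_y0 y0_small k.
apply: (small _ `|y0|) => //.
have feas_yk := closed_loop_feasible sel_opt terminal feas_y0 k.
have yk_in_X := closed_loop_in_X N_gt0 sel_opt terminal y0_in_X feas_y0 k.
have [lower _] := value_bounds _ yk_in_X _ (sel_opt _ feas_yk).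
have [_ upper] := value_bounds _ y0_in_X _ (sel_opt _ feas_y0).
apply: le_trans lower _; apply: le_trans _ upper.
exact: (closed_loop_value_le N_gt0 sel_opt terminal feas_y0 k).
Qed.
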